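(* Let $1\le r\le s\le t$ and let $u=ABCd$, $v=A'B'C'd'$ be vertices of $E3C(r,s,t)$ with $A=A'$, $B=B'$, $C\ne C'$ and $d\ne d'$. Then there exist $2r+2$ pairwise internally disjoint $u$–$v$ paths in $E3C(r,s,t)$, each of length at most $t+6$ if $\{d,d'\}=\{0,1\}$ or $\{d,d'\}=\{0,2\}$, and each of length at most $t+8$ if $\{d,d'\}=\{1,2\}$.
   Context: The exchanged 3-ary $n$-cube $E3C(r,s,t)$ ($r,s,t\ge1$, $n=r+s+t+1$): vertices are strings written $x=ABCd$ with $A\in\{0,1,2\}^r$, $B\in\{0,1,2\}^s$, $C\in\{0,1,2\}^t$, $d\in\{0,1,2\}$. Two distinct vertices $x=ABCd$, $y=A'B'C'd'$ are adjacent iff one of: (E0) $A=A',B=B',C=C'$ and $d\ne d'$; (E1) $d=d'=0$, $A=A'$, $B=B'$ and $C,C'$ differ in exactly one position; (E2) $d=d'=1$, $A=A'$, $C=C'$ and $B,B'$ differ in exactly one position; (E3) $d=d'=2$, $B=B'$, $C=C'$ and $A,A'$ differ in exactly one position. Paths are internally disjoint if they share no vertices other than their endpoints; length = number of edges. *)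

From mathcomp Require Import all_boot.
Set Implicit Arguments. Unset Strict Implicit. Unset Printing Implicit Defensive.

(* Exchanged 3-ary n-cube E3C(r,s,t). A vertex ABCd is encoded as a 4-tuple
   (A, B, C, d) with A : 'I_r -> 'I_3, B : 'I_s -> 'I_3, C : 'I_t -> 'I_3, d : 'I_3. *)
Definition word (k : nat) := {ffun 'I_k -> 'I_3}.
Definition vertex (r s t : nat) : finType :=
  (word r * word s * word t * 'I_3)%type.

Definition vA r s t (x : vertex r s t) : word r := x.1.1.1.
Definition vB r s t (x : vertex r s t) : word s := x.1.1.2.
Definition vC r s t (x : vertex r s t) : word t := x.1.2.
Definition vd r s t (x : vertex r s t) : 'I_3 := x.2.

Definition diff1 k (X Y : word k) : bool := #|[pred i | X i != Y i]| == 1.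

Definition e3c_adj r s t (x y : vertex r s t) : bool :=
  (x != y) &&
  ( ((vA x == vA y) && (vB x == vB y) && (vC x == vC y) && (vd x != vd y))
 || ((val (vd x) == 0) && (val (vd y) == 0) && (vA x == vA y) && (vB x == vB y) && diff1 (vC x) (vC y))
 || ((val (vd x) == 1) && (val (vd y) == 1) && (vA x == vA y) && (vC x == vC y) && diff1 (vB x) (vB y))
 || ((val (vd x) == 2) && (val (vd y) == 2) && (vB x == vB y) && (vC x == vC y) && diff1 (vA x) (vA y)) ).

Definition is_path r s t (u v : vertex r s t) (p : seq (vertex r s t)) : bool :=
  [&& head v p == u, last u p == v, path (@e3c_adj r s t) u (behead p) & uniq p].

Definition plen T (p : seq T) : nat := (size p).-1.

Definition interior T (p : seq T) : seq T :=
  if p is x :: q then behead (belast x q) else [::].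

(* a family of paths indexed by I is pairwise internally disjoint:
   distinct paths share no internal vertex (and no internal vertex of one path
   lies on another path; as endpoints are common, this is the same as sharing
   no vertex other than the endpoints) *)
Definition int_disjoint (I : finType) (T : eqType) (P : I -> seq T) : Prop :=
  forall i j : I, i != j -> forall x : T, x \in interior (P i) -> x \in P j -> False.

From mathcomp Require Import all_boot zify.
Set Implicit Arguments. Unset Strict Implicit. Unset Printing Implicit Defensive.

(* Every path leaves [u], crosses from [C] to [C'] inside a subcube
   [{(A*, B*, W, 0)}] by correcting the positions of [C] one at a time (at most
   [t] steps) and comes back to [v].  The subcubes are made distinct by first
   moving to the [n]-th neighbour [A_n] and/or [B_n] of [A] and [B] (there are
   [2r] of them, and [r <= s]), letters [1] and [2] being used to switch
   coordinates; for [{d, d'} = {0, 2}] the return trip goes through the [n]-th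
   neighbour of [C'] instead.  Each inner vertex of the [n]-th walk determines
   [n] from its coordinates, so the walks, once shortened to paths, are
   internally disjoint.  The case [{0, 1}] is the case [{0, 2}] in
   [E3C(s,r,t)] transported by the isomorphism exchanging [A] and [B], and the
   reversed orientations follow by reversing the paths. *)

Definition d0 : 'I_3 := @Ordinal 3 0 isT.
Definition d1 : 'I_3 := @Ordinal 3 1 isT.
Definition d2 : 'I_3 := @Ordinal 3 2 isT.

Lemma ord3P (d : 'I_3) : [\/ d = d0, d = d1 | d = d2].
Proof.
by case: d => [[|[|[|//]]] ?]; [apply: Or31 | apply: Or32 | apply: Or33]; apply: val_inj.
Qed.

(* [nbr3 a false] and [nbr3 a true] are the two letters different from [a];
   [nbr3_bit a] recovers the boolean. *)
Definition nbr3 (a : 'I_3) (b : bool) : 'I_3 := @Ordinal 3 ((a + b.+1) %% 3) (@ltn_pmod _ 3 isT).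
Definition nbr3_bit (a a' : 'I_3) : bool := (a' + 3 - a) %% 3 == 2.

Lemma nbr3_neq a b : nbr3 a b != a.
Proof. by case: a => [[|[|[|//]]] ?]; case: b. Qed.

Lemma nbr3_bitK a b : nbr3_bit a (nbr3 a b) = b.
Proof. by case: a => [[|[|[|//]]] ?]; case: b. Qed.

Section Words.
Variable k : nat.
Implicit Types (X Y W : word k) (i : 'I_k) (n : nat).

Lemma diff1_sym X Y : diff1 X Y = diff1 Y X.
Proof. by rewrite /diff1; congr (_ == _); apply: eq_card => i; rewrite !inE eq_sym. Qed.

Lemma diff1_neq X Y : diff1 X Y -> X != Y.
Proof.
apply: contraL => /eqP ->; rewrite /diff1.
by rewrite (@eq_card0 _ [pred i | Y i != Y i]) // => i; rewrite !inE eqxx.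
Qed.

Lemma diff1_at X Y i : X i != Y i -> (forall i', i' != i -> X i' = Y i') -> diff1 X Y.
Proof.
move=> XYi XYi'; rewrite /diff1; apply/eqP/(eq_trans _ (card1 i))/eq_card => i'.
by rewrite !inE; case: (eqVneq i' i) => [-> | /XYi' ->]; rewrite ?XYi ?eqxx.
Qed.

Definition nbr X n : word k :=
  [ffun i => if val i == n./2 then nbr3 (X i) (odd n) else X i].

Definition nbr_index X Y : nat :=
  if [pick i | X i != Y i] is Some i then (nbr3_bit (X i) (Y i) + i.*2)%N else 0.

Lemma nbr_differ X n i : (X i != nbr X n i) = (val i == n./2).
Proof. by rewrite ffunE; case: ifP => _; rewrite ?eqxx // eq_sym nbr3_neq. Qed.

Lemma diff1_nbr X n : n < 2 * k -> diff1 X (nbr X n).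
Proof.
rewrite mul2n -ltn_half_double => lt_nk.
apply: (@diff1_at _ _ (Ordinal lt_nk)); first by rewrite nbr_differ.
move=> i' ne; apply/eqP; rewrite -[_ == _]negbK (nbr_differ X n i').
by rewrite -(inj_eq val_inj) in ne.
Qed.

Lemma nbr_diff1 X n : n < 2 * k -> diff1 (nbr X n) X.
Proof. by rewrite diff1_sym; apply: diff1_nbr. Qed.

Lemma nbr_eq_self X n : n < 2 * k -> (nbr X n == X) = false.
Proof. by move/(diff1_nbr X)/diff1_neq; rewrite eq_sym => /negbTE. Qed.

Lemma nbr_indexK X n : n < 2 * k -> nbr_index X (nbr X n) = n.
Proof.
rewrite mul2n -ltn_half_double => lt_nk; rewrite /nbr_index.
case: pickP => [i | none]; last by have := none (Ordinal lt_nk); rewrite /= nbr_differ eqxx.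
rewrite /= nbr_differ => /eqP ei.
by rewrite ffunE ei eqxx nbr3_bitK [nat_of_ord i]ei odd_double_half.
Qed.

Definition upd X i (a : 'I_3) : word k := [ffun i' => if i' == i then a else X i'].

Lemma diff1_upd X i a : X i != a -> diff1 X (upd X i a).
Proof. by move=> Xia; apply: (diff1_at (i := i)) => [|i' /negbTE ne]; rewrite ffunE ?eqxx ?ne. Qed.

Lemma nbr_eq_upd X n i a : X i != a -> nbr X n i = a -> nbr X n = upd X i a.
Proof.
move=> Xia nbr_i; have /eqP i_half : val i == n./2 by rewrite -(nbr_differ X) nbr_i.
apply/ffunP => i'; rewrite !ffunE; case: (eqVneq i' i) => [-> | ne]; first by rewrite -nbr_i ffunE.
by rewrite -i_half (inj_eq val_inj) (negbTE ne).
Qed.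

Fixpoint steps X Y (ps : seq 'I_k) : seq (word k) :=
  if ps is i :: ps' then
    if X i == Y i then steps X Y ps' else upd X i (Y i) :: steps (upd X i (Y i)) Y ps'
  else [::].

Definition chain X Y : seq (word k) := X :: steps X Y (enum 'I_k).

Lemma path_steps X Y ps : path (@diff1 k) X (steps X Y ps).
Proof.
elim: ps X => [|i ps IH] X //=.
by case: ifP => [_ | /negbT XYi]; rewrite /= ?IH ?diff1_upd.
Qed.

Lemma last_steps X Y ps i : last X (steps X Y ps) i = if i \in ps then Y i else X i.
Proof.
elim: ps X => [|i0 ps IH] X //=.
case: eqP => [XYi0 | _]; rewrite /= IH in_cons ?ffunE; case: (eqVneq i i0) => [-> | _] //=;
  by case: ifP.
Qed.

Lemma size_steps X Y ps : size (steps X Y ps) <= size ps.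
Proof. by elim: ps X => [|i ps IH] X //=; case: ifP => _; rewrite ?ltnS ?IH ?leqW ?IH. Qed.

Lemma last_chain X Y : last X (chain X Y) = Y.
Proof. by apply/ffunP => i; rewrite /= last_steps mem_enum. Qed.

Lemma size_chain X Y : size (chain X Y) <= k.+1.
Proof. by rewrite /= ltnS (leq_trans (size_steps _ _ _)) ?size_enum_ord. Qed.

Lemma mem_chain X Y W i : W \in chain X Y -> W i = X i \/ W i = Y i.
Proof.
rewrite inE => /predU1P [-> | ]; first by left.
elim: (enum 'I_k) X => [|i0 ps IH] X //=.
case: ifP => _; first exact: IH.
rewrite inE => /predU1P [-> | /IH]; rewrite ffunE; first by case: eqP => [->|]; [right | left].
by case: eqP => [-> | _] [] ->; [right | right | left | right].
Qed.

End Words.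

Section Interior.
Variable T : eqType.
Implicit Types (x y z : T) (p : seq T).

Lemma interior_rcons x p z : interior (x :: rcons p z) = p.
Proof. by rewrite /interior belast_rcons. Qed.

Lemma interior_rev p : interior (rev p) = rev (interior p).
Proof.
case: p => [|x p] //; case/lastP: p => [|p z] //.
by rewrite rev_cons rev_rcons rcons_cons !interior_rcons.
Qed.

Lemma interior_map (T' : eqType) (f : T -> T') p : interior (map f p) = map f (interior p).
Proof.
case: p => [|x p] //; case/lastP: p => [|p z] //.
by rewrite [map f _]/= map_rcons /interior !belast_rcons.
Qed.

Lemma mem_interior x p y : uniq (x :: p) -> y \in interior (x :: p) ->
  [/\ y \in p, y != x & y != last x p].
Proof.
case/lastP: p => [|p z] //; rewrite interior_rcons last_rcons /= mem_rcons inE.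
case/andP => /norP [_ xp]; rewrite rcons_uniq => /andP [zp _] yp.
by rewrite mem_rcons inE yp orbT; split => //; [apply: contraNneq xp | apply: contraNneq zp] => <-.
Qed.

End Interior.

Section Cube.
Variables r s t : nat.
Local Notation V := (vertex r s t).
Local Notation adj := (@e3c_adj r s t).
Implicit Types (u v x y : V) (p : seq V).

Lemma adj_sym x y : e3c_adj x y = e3c_adj y x.
Proof.
rewrite /e3c_adj eq_sym ![vA y == _]eq_sym ![vB y == _]eq_sym ![vC y == _]eq_sym.
rewrite [vd y == _]eq_sym (diff1_sym (vC x)) (diff1_sym (vB x)) (diff1_sym (vA x)).
by case: (vd x) (vd y) => [[|[|[|//]]] ?] [[|[|[|//]]] ?]; rewrite //= ?andbF.
Qed.

Implicit Types (A : word r) (B : word s) (C X Y : word t).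

Lemma adj0 A B C (d d' : 'I_3) : d != d' -> e3c_adj (A, B, C, d) (A, B, C, d').
Proof. by move=> dd'; rewrite /e3c_adj !xpair_eqE /= !eqxx dd'. Qed.

Lemma adjC A B C C' : diff1 C C' -> e3c_adj (A, B, C, d0) (A, B, C', d0).
Proof. by move=> CC'; rewrite /e3c_adj !xpair_eqE /= !eqxx CC' (negbTE (diff1_neq CC')). Qed.

Lemma adjB A B B' C : diff1 B B' -> e3c_adj (A, B, C, d1) (A, B', C, d1).
Proof. by move=> BB'; rewrite /e3c_adj !xpair_eqE /= !eqxx BB' (negbTE (diff1_neq BB')). Qed.

Lemma adjA A A' B C : diff1 A A' -> e3c_adj (A, B, C, d2) (A', B, C, d2).
Proof. by move=> AA'; rewrite /e3c_adj !xpair_eqE /= !eqxx AA' (negbTE (diff1_neq AA')). Qed.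

Definition cwalk A B (X Y : word t) : seq V := [seq (A, B, W, d0) | W <- chain X Y].

Lemma path_cwalk x A B X Y : path adj x (cwalk A B X Y) = e3c_adj x (A, B, X, d0).
Proof.
rewrite /= path_map (sub_path _ (path_steps X Y _)) ?andbT // => W W'.
exact: adjC.
Qed.

Lemma last_cwalk x A B X Y : last x (cwalk A B X Y) = (A, B, Y, d0).
Proof. by rewrite /= last_map; have /= -> := last_chain X Y. Qed.

Lemma size_cwalk A B X Y : size (cwalk A B X Y) <= t.+1.
Proof. by rewrite size_map size_chain. Qed.

Lemma is_path_rev u v p : is_path u v p -> is_path v u (rev p).
Proof.
case: p => [|x q] /and4P [/= /eqP hu /eqP hv P U].
  by rewrite /is_path /= hu !eqxx.
subst x; rewrite /is_path rev_uniq [uniq (_ :: _)]/= U andbT.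
rewrite lastI rev_rcons /= hv eqxx /=.
have := rev_path adj u q; rewrite hv => ->.
apply/andP; split; last by apply: sub_path P => a b; rewrite adj_sym.
case: q hv {P U} => [|y q] /= hv; first by rewrite -hv.
by rewrite rev_cons last_rcons.
Qed.

End Cube.

(* [E3C(r,s,t)] and [E3C(s,r,t)] are isomorphic: exchange the words [A] and [B]
   and the letters [1] and [2]. *)
Definition swap12 (d : 'I_3) : 'I_3 := @Ordinal 3 ((3 - d) %% 3) (@ltn_pmod _ 3 isT).

Definition exchange r s t (x : vertex r s t) : vertex s r t :=
  (vB x, vA x, vC x, swap12 (vd x)).

Lemma exchangeK r s t : cancel (@exchange r s t) (@exchange s r t).
Proof.
case=> [[[A B] C] d]; congr (_, _, _, _); apply: val_inj.
by case: d => [[|[|[|//]]] ?].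
Qed.

Lemma exchange_adj r s t : {mono @exchange r s t : x y / e3c_adj x y}.
Proof.
move=> [[[A B] C] d] [[[A' B'] C'] d'].
rewrite /e3c_adj (inj_eq (can_inj (@exchangeK r s t))) /exchange /vA /vB /vC /vd /=.
by case: d d' => [[|[|[|//]]] ?] [[|[|[|//]]] ?];
  rewrite /= ?orbF ?(andbC (B == B')) -?andbA.
Qed.

Definition disjoint_paths r s t (u v : vertex r s t) (N b : nat) : Prop :=
  exists P : 'I_N -> seq (vertex r s t),
    (forall i, is_path u v (P i)) /\ int_disjoint P /\ (forall i, plen (P i) <= b).

Lemma disjoint_paths_sym r s t (u v : vertex r s t) N b :
  disjoint_paths u v N b -> disjoint_paths v u N b.
Proof.
case=> P [pathP [disjP lenP]]; exists (fun i => rev (P i)); split; [|split].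
- by move=> i; apply: is_path_rev.
- by move=> i j ij x; rewrite interior_rev !mem_rev; apply: disjP.
- by move=> i; rewrite /plen size_rev; apply: lenP.
Qed.

Section Transport.
Variables (r s t r' s' t' : nat) (f : vertex r s t -> vertex r' s' t').
Hypotheses (f_inj : injective f) (f_adj : {mono f : x y / e3c_adj x y}).

Lemma is_path_map u v p : is_path u v p -> is_path (f u) (f v) (map f p).
Proof.
case/and4P => hu hv pp up; apply/and4P; split.
- by case: p hu {hv pp up} => [|x p] /= /eqP ->.
- by rewrite last_map (eqP hv).
- by rewrite behead_map path_map (eq_path (e' := @e3c_adj r s t) f_adj).
- by rewrite map_inj_uniq.
Qed.

Lemma disjoint_paths_map u v N b :
  disjoint_paths u v N b -> disjoint_paths (f u) (f v) N b.
Proof.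
case=> P [pathP [disjP lenP]]; exists (fun i => map f (P i)); split; [|split].
- by move=> i; apply: is_path_map.
- move=> i j ij y; rewrite interior_map => /mapP [x xi ->].
  by rewrite mem_map //; apply: disjP ij x xi.
- by move=> i; rewrite /plen size_map; apply: lenP.
Qed.

End Transport.

Section TaggedWalks.
Variables (r s t : nat).
Local Notation V := (vertex r s t).
Implicit Types (u v : V) (w : seq V).

(* The tag of an inner vertex names the walk it lies on, which makes walks
   with distinct tags internally disjoint. *)
Definition tagged_walk u v (b : nat) (tag : V -> nat) (n : nat) w : Prop :=
  [/\ path (@e3c_adj r s t) u (rcons w v), size w < b & all (fun x => tag x == n) w].

Lemma tagged_walk_shorten u v b tag n w : tagged_walk u v b tag n w ->
  [/\ is_path u v (u :: shorten u (rcons w v)),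
      plen (u :: shorten u (rcons w v)) <= b
    & forall x, x \in u :: shorten u (rcons w v) -> x != u -> x != v -> tag x = n].
Proof.
case=> walk_uv size_w tag_w; have := last_rcons u w v.
case/shortenP: walk_uv => p path_p uniq_p sub_p last_p; split.
- by rewrite /is_path /= eqxx last_p eqxx path_p.
- apply: leq_trans size_w; rewrite -(size_rcons w v) uniq_leq_size //.
  by case/andP: uniq_p.
- move=> x; rewrite inE => /predU1P [-> /eqP // | /sub_p].
  rewrite mem_rcons inE => /predU1P [-> _ /eqP // | x_w] _ _.
  exact/eqP/(allP tag_w).
Qed.

Lemma disjoint_paths_of_walks u v N b (tag : V -> nat) (w : nat -> seq V) :
  (forall n, n < N -> tagged_walk u v b tag n (w n)) -> disjoint_paths u v N b.
Proof.
move=> walkP; exists (fun i => u :: shorten u (rcons (w i) v)).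
have {}walkP (i : 'I_N) := tagged_walk_shorten (walkP i (ltn_ord i)).
split; [|split] => [i | i j ij x x_i x_j | i]; case: (walkP i) => // path_i _ tag_i.
case/and4P: path_i => _ /eqP last_i _ uniq_i; have [_ _ tag_j] := walkP j.
case: (mem_interior uniq_i x_i) => x_Pi xu; rewrite /= in last_i; rewrite last_i => xv.
have {}x_i : x \in u :: shorten u (rcons (w i) v) by rewrite inE x_Pi orbT.
by move/eqP: ij; apply; apply: ord_inj; rewrite -(tag_i x x_i xu xv) (tag_j x x_j xu xv).
Qed.

End TaggedWalks.

Section OneToTwo.
Variables (r s t : nat) (A : word r) (B : word s) (C C' : word t).
Hypotheses (r_gt0 : 0 < r) (r_le_s : r <= s).
Local Notation V := (vertex r s t).

Definition walk12 (n : nat) : seq V :=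
  if n == 0 then
    [:: (A, nbr B 0, C, d1)] ++ cwalk A (nbr B 0) C C'
    ++ [:: (A, nbr B 0, C', d1); (A, B, C', d1)]
  else if n < 2 * r then
    [:: (A, nbr B n, C, d1); (A, nbr B n, C, d2); (nbr A n, nbr B n, C, d2)]
    ++ cwalk (nbr A n) (nbr B n) C C'
    ++ [:: (nbr A n, nbr B n, C', d1); (nbr A n, B, C', d1); (nbr A n, B, C', d2)]
  else if n == 2 * r then cwalk A B C C'
  else [:: (A, B, C, d2); (nbr A 0, B, C, d2)] ++ cwalk (nbr A 0) B C C'
       ++ [:: (nbr A 0, B, C', d2)].

Definition tag12 (x : V) : nat :=
  let: (a, b, _, d) := x in
  if a != A then (if nbr_index A a == 0 then (2 * r).+1 else nbr_index A a)
  else if b != B then nbr_index B b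
  else if d == d1 then 0 else if d == d2 then (2 * r).+1 else 2 * r.

Lemma walk12_path n : path (@e3c_adj r s t) (A, B, C, d1) (rcons (walk12 n) (A, B, C', d2)).
Proof.
have r2_gt0 : 0 < 2 * r by lia.
have s2_gt0 : 0 < 2 * s by lia.
rewrite /walk12; case: (eqVneq n 0) => [_ | n_gt0].
  rewrite !rcons_cat !cat_path path_cwalk last_cwalk /=.
  by rewrite adjB ?diff1_nbr ?adj0 ?adjB ?nbr_diff1.
case: ifP => [n_lt_r | _].
  have n_lt_s : n < 2 * s by lia.
  rewrite !rcons_cat !cat_path path_cwalk last_cwalk /=.
  by rewrite adjB ?diff1_nbr ?adj0 ?adjA ?diff1_nbr ?adj0 ?adjB ?nbr_diff1 ?adj0 ?adjA ?nbr_diff1.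
case: ifP => [_ | _].
  by rewrite rcons_path path_cwalk last_cwalk !adj0.
rewrite !rcons_cat !cat_path path_cwalk last_cwalk /=.
by rewrite adj0 ?adjA ?diff1_nbr ?adj0 ?adjA ?nbr_diff1.
Qed.

Lemma walk12_tags n : n < 2 * r + 2 -> all (fun x => tag12 x == n) (walk12 n).
Proof.
move=> n_lt; have r2_gt0 : 0 < 2 * r by lia.
have s2_gt0 : 0 < 2 * s by lia.
rewrite /walk12; case: (eqVneq n 0) => [-> | n_gt0].
  rewrite !all_cat all_map; apply/and3P; split; [| apply/allP => W _ |];
  by rewrite /= /tag12 /= ?eqxx ?nbr_eq_self ?nbr_indexK //= ?eqxx.
case: ifP => [n_lt_r | n_ge_r].
  have n_lt_s : n < 2 * s by lia.
  rewrite !all_cat all_map; apply/and3P; split; [| apply/allP => W _ |];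
  by rewrite /= /tag12 /= ?eqxx ?nbr_eq_self ?nbr_indexK ?(negbTE n_gt0) //= ?eqxx.
case: (eqVneq n (2 * r)) => [-> | n_ne].
  by apply/allP => _ /mapP [W _ ->]; rewrite /tag12 /= !eqxx.
have -> : n = (2 * r).+1 by lia.
rewrite !all_cat all_map; apply/and3P; split; [| apply/allP => W _ |];
by rewrite /= /tag12 /= ?eqxx ?nbr_eq_self ?nbr_indexK //= ?eqxx.
Qed.

Lemma walk12_size n : size (walk12 n) < t + 8.
Proof.
rewrite /walk12; case: ifP => _; [|case: ifP => _; [|case: ifP => _]];
rewrite ?size_cat; set z := size (cwalk _ _ _ _); have : z <= t.+1 := size_cwalk _ _ _ _;
rewrite /=; lia.
Qed.

Lemma disjoint_paths12 : disjoint_paths (A, B, C, d1) (A, B, C', d2) (2 * r + 2) (t + 8).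
Proof.
apply: (disjoint_paths_of_walks (tag := tag12) (w := walk12)) => n n_lt.
by split; [apply: walk12_path | apply: walk12_size | apply: walk12_tags].
Qed.

End OneToTwo.

Section TwoToZero.
Variables (r s t m : nat) (A : word r) (B : word s) (C C' : word t) (j : 'I_t).
Hypotheses (m_le_r : m <= r) (m_le_t : m <= t) (s_gt0 : 0 < s) (Cj : C j != C' j).
Local Notation V := (vertex r s t).
Local Notation Y := (upd C' j (C j)).

(* If [nbr C' n] agrees with [C] at [j], it is [Y], and [(A, B, Y, 0)] lies on
   walk [2 * m]; walk [n] then returns through [(A, B, C', 2)] instead, which
   [tag20] attributes to the index of [Y]. *)
Definition walk20 (n : nat) : seq V :=
  if n < 2 * m then
    if nbr C' n j == C j then
      [:: (nbr A n, B, C, d2)] ++ cwalk (nbr A n) B C C'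
      ++ [:: (nbr A n, B, C', d2); (A, B, C', d2)]
    else
      [:: (nbr A n, B, C, d2)] ++ cwalk (nbr A n) B C (nbr C' n)
      ++ [:: (nbr A n, B, nbr C' n, d2); (A, B, nbr C' n, d2); (A, B, nbr C' n, d0)]
  else if n == 2 * m then cwalk A B C Y
  else [:: (A, B, C, d1); (A, nbr B 0, C, d1)] ++ cwalk A (nbr B 0) C C'
       ++ [:: (A, nbr B 0, C', d1); (A, B, C', d1)].

Definition tag20 (x : V) : nat :=
  let: (a, b, c, d) := x in
  if a != A then nbr_index A a
  else if (b != B) || (d == d1) then (2 * m).+1
  else if d == d0 then (if c j == C j then 2 * m else nbr_index C' c)
  else nbr_index C' (if c == C' then Y else c).

Lemma walk20_path n : path (@e3c_adj r s t) (A, B, C, d2) (rcons (walk20 n) (A, B, C', d0)).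
Proof.
have s2_gt0 : 0 < 2 * s by lia.
rewrite /walk20; case: ifP => [n_lt_m | _].
  have n_lt_r : n < 2 * r by lia.
  have n_lt_t : n < 2 * t by lia.
  case: ifP => _; rewrite !rcons_cat !cat_path path_cwalk last_cwalk /=.
    by rewrite adjA ?diff1_nbr ?adj0 ?adjA ?nbr_diff1 ?adj0.
  by rewrite adjA ?diff1_nbr ?adj0 ?adjA ?nbr_diff1 ?adj0 ?adjC ?nbr_diff1.
case: ifP => _.
  rewrite rcons_path path_cwalk last_cwalk adj0 // adjC //.
  by rewrite diff1_sym diff1_upd // eq_sym.
rewrite !rcons_cat !cat_path path_cwalk last_cwalk /=.
by rewrite adj0 ?adjB ?diff1_nbr ?adj0 ?adjB ?nbr_diff1 ?adj0.
Qed.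

Lemma walk20_tags n : n < 2 * m + 2 -> all (fun x => tag20 x == n) (walk20 n).
Proof.
move=> n_lt; have s2_gt0 : 0 < 2 * s by lia.
rewrite /walk20; case: ifP => [n_lt_m | n_ge_m].
  have n_lt_r : n < 2 * r by lia.
  have n_lt_t : n < 2 * t by lia.
  case: ifP => [/eqP special | /negbT ordinary].
    have Y_nbr : Y = nbr C' n by rewrite (nbr_eq_upd _ special) // eq_sym.
    rewrite !all_cat all_map; apply/and3P; split; [| apply/allP => W _ |];
    by rewrite /= ?eqxx ?Y_nbr ?nbr_eq_self ?nbr_indexK //= ?eqxx.
  rewrite !all_cat all_map; apply/and3P; split; [| apply/allP => W _ |];
  by rewrite /= ?eqxx ?nbr_eq_self ?nbr_indexK ?(negbTE ordinary) //= ?eqxx.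
case: (eqVneq n (2 * m)) => [-> | n_ne].
  apply/allP => _ /mapP [W /(mem_chain j) W_j ->] /=; rewrite !eqxx.
  by case: W_j => ->; rewrite /= ?ffunE !eqxx.
have -> : n = (2 * m).+1 by move: n_lt n_ge_m n_ne; clear; lia.
rewrite !all_cat all_map; apply/and3P; split; [| apply/allP => W _ |];
by rewrite /= ?eqxx ?nbr_eq_self ?orbT //= ?eqxx.
Qed.

Lemma walk20_size n : size (walk20 n) < t + 6.
Proof.
rewrite /walk20; case: ifP => _; [case: ifP => _|case: ifP => _];
rewrite ?size_cat; set z := size (cwalk _ _ _ _); have : z <= t.+1 := size_cwalk _ _ _ _;
rewrite /=; lia.
Qed.

Lemma disjoint_paths20 : disjoint_paths (A, B, C, d2) (A, B, C', d0) (2 * m + 2) (t + 6).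
Proof.
apply: (disjoint_paths_of_walks (tag := tag20) (w := walk20)) => n n_lt.
by split; [apply: walk20_path | apply: walk20_size | apply: walk20_tags].
Qed.

End TwoToZero.

Theorem lemma15 (r s t : nat) (u v : vertex r s t) :
  1 <= r -> r <= s -> s <= t ->
  vA u = vA v -> vB u = vB v -> vC u <> vC v -> vd u <> vd v ->
  exists P : 'I_(2 * r + 2) -> seq (vertex r s t),
    (forall i, is_path u v (P i)) /\
    int_disjoint P /\
    (forall i,
       plen (P i) <=
       (if ((val (vd u) == 1) && (val (vd v) == 2)) || ((val (vd u) == 2) && (val (vd v) == 1))
        then t + 8 else t + 6)).
Proof.
move=> r_gt0 r_le_s s_le_t.
case: u v => [[[A B] C] d] [[[A' B'] C'] d']; rewrite /vA /vB /vC /vd /= => <- <- CC' dd'.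
have [j Cj] : exists j, C j != C' j.
  case: (pickP (fun i => C i != C' i)) => [j Cj | C_eq]; first by exists j.
  by case: CC'; apply/ffunP => i; apply/eqP/negbFE/C_eq.
have Cj' : C' j != C j by rewrite eq_sym.
have paths20 (X Y : word t) i : X i != Y i ->
    disjoint_paths (A, B, X, d2) (A, B, Y, d0) (2 * r + 2) (t + 6).
  move=> XYi; have s_gt0 := leq_trans r_gt0 r_le_s.
  exact: disjoint_paths20 (leqnn r) (leq_trans r_le_s s_le_t) s_gt0 XYi.
have paths10 (X Y : word t) i : X i != Y i ->
    disjoint_paths (A, B, X, d1) (A, B, Y, d0) (2 * r + 2) (t + 6).
  move=> XYi; have := disjoint_paths_map (can_inj (@exchangeK s r t)) (@exchange_adj s r t)
    (disjoint_paths20 (m := r) B A r_le_s (leq_trans r_le_s s_le_t) r_gt0 XYi).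
  by congr disjoint_paths; congr (_, _, _, _); apply: val_inj.
case: (ord3P d) (ord3P d') dd' => -> [] -> // _.
- by apply: disjoint_paths_sym; apply: paths10 Cj'.
- by apply: disjoint_paths_sym; apply: paths20 Cj'.
- exact: paths10 Cj.
- exact: disjoint_paths12.
- exact: paths20 Cj.
- by apply: disjoint_paths_sym; apply: disjoint_paths12.
Qed.
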